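(* Let $\mathsf{A}$ and $\mathsf{B}$ be two distinct users in the all-to-all broadcast coded slotted ALOHA model described in the context, and let $\boldsymbol{g} = [\mathcal{G}_\mathsf{A}(\mathsf{B}),\,\mathcal{A}_\mathsf{B}(\mathsf{A}),\,\mathcal{G}_\mathsf{B}(\mathsf{A})]$. Then $\Pr\{\boldsymbol{g} = [1,\,0,\,1]\} = 0$; that is, it can never happen that $\mathsf{A}$ resolves $\mathsf{B}$, $\mathsf{A}$'s handshake decoding on behalf of $\mathsf{B}$ fails to resolve $\mathsf{A}$, and yet $\mathsf{B}$ actually resolves $\mathsf{A}$.
   Context: Model (all-to-all broadcast coded slotted ALOHA): there are $m$ users and a frame of $n$ slots. Each user independently draws a degree $l\in\{0,\dots,q\}$ with probability $\lambda_l$ (degree distribution $\lambda(x)=\sum_{l=0}^q\lambda_l x^l$) and transmits $l$ copies of its packet in $l$ distinct slots of the frame chosen uniformly at random; each copy contains pointers to the locations of all copies. This is represented by a bipartite graph $\mathcal{G}=\{\mathcal{V},\mathcal{C},\mathcal{E}\}$ whose variable nodes (VNs) are the users, whose check nodes (CNs) are the slots, and with an edge between user $j$ and slot $i$ iff user $j$ transmits in slot $i$. Users are half-duplex: a user receives nothing in the slots it transmits in. Decoding (peeling): given a bipartite graph, repeatedly find a CN connected to exactly one not-yet-resolved VN (a singleton slot), declare that VN resolved, and remove all edges of that VN (interference cancellation of all its copies, whose locations are known from the pointers); stop when no such CN exists. A VN is resolvable on a graph iff it is resolved by this procedure (equivalently, it does not belong to a stopping set: a set $\mathcal{S}$ of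 VNs of nonzero degree such that every CN adjacent to $\mathcal{S}$ is connected to $\mathcal{S}$ at least twice). Induced graph: for a user $\mathsf{U}$, $\mathcal{G}_\mathsf{U}$ is the graph obtained from $\mathcal{G}$ by removing the CNs (slots) in which $\mathsf{U}$ transmits together with all their edges. For users $\mathsf{U}\neq\mathsf{V}$, $\mathcal{G}_\mathsf{U}(\mathsf{V})=1$ if $\mathsf{V}$ is resolvable by peeling on $\mathcal{G}_\mathsf{U}$, and $\mathcal{G}_\mathsf{U}(\mathsf{V})=0$ otherwise. Reconstructed graph: after user $\mathsf{A}$ decodes on $\mathcal{G}_\mathsf{A}$, it forms the graph $\mathcal{A}''$ consisting of the users it resolved, the slots of $\mathcal{G}_\mathsf{A}$, and the edges from each resolved user to its slots; it also knows which slots still contain residual interference (i.e., contain packets of users it did not resolve). It removes the slots with residual interference and all edges attached to them, obtaining $\mathcal{A}'$. It then adds itself as a VN together with its own slots as CNs, connecting itself to these slots; the result is the reconstructed graph $\mathcal{A}$. If $\mathcal{G}_\mathsf{A}(\mathsf{B})=1$ (so the slots of $\mathsf{B}$ are known to $\mathsf{A}$), $\mathcal{A}_\mathsf{B}$ denotes the graph obtained from $\mathcal{A}$ by removing the slots used by $\mathsf{B}$ and their edges, and $\mathcal{A}_\mathsf{B}(\mathsf{A})=1$ if $\mathsf{A}$ is resolvable by peeling on $\mathcal{A}_\mathsf{B}$, $\mathcal{A}_\mathsf{B}(\mathsf{A})=0$ otherwise. If $\mathcal{G}_\mathsf{A}(\mathsf{B})=0$, one sets $\mathcal{A}_\mathsf{B}(\mathsf{A})=\mathsf{x}$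 (handshake not possible). The probability is over the random choice of degrees and slots. *)

From HB Require Import structures.
From mathcomp Require Import all_boot all_order all_algebra.
Set Implicit Arguments. Unset Strict Implicit. Unset Printing Implicit Defensive.
Import Order.TTheory GRing.Theory Num.Theory.

(* One peeling round: every VN that is the unique not-yet-resolved neighbour of
   some CN becomes resolved (edges of resolved VNs are thereby cancelled). *)
Definition peel_step (V C : finType) (E : V -> C -> bool) (R : {set V}) : {set V} :=
  R :|: [set v | [exists c, E v c && [forall u, E u c ==> (u == v) || (u \in R)]]].

(* Set of VNs resolved by peeling (the procedure stabilises within #|V| rounds). *)
Definition resolved (V C : finType) (E : V -> C -> bool) : {set V} :=
  iter #|V| (peel_step E) set0.

Definition resolvable (V C : finType) (E : V -> C -> bool) (v : V) : bool :=
  v \in resolved E.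

Definition remove_cns (V C : finType) (E : V -> C -> bool) (K : {set C}) : V -> C -> bool :=
  fun v c => E v c && (c \notin K).

(* A configuration assigns to each user the set of slots it transmits in. *)
Definition config (m n : nat) := {ffun 'I_m -> {set 'I_n}}.

Definition Gedge m n (S : config m n) : 'I_m -> 'I_n -> bool :=
  fun j i => i \in S j.

Definition Gind m n (S : config m n) (U : 'I_m) := remove_cns (Gedge S) (S U).

Definition Gres m n (S : config m n) (U V : 'I_m) : bool := resolvable (Gind S U) V.

(* Slot i of G_A still containing residual interference (a packet of a user
   that A did not resolve). *)
Definition residual m n (S : config m n) (A : 'I_m) (i : 'I_n) : bool :=
  (i \notin S A) &&
  [exists u, (u \notin resolved (Gind S A)) && (i \in S u)].

(* Reconstructed graph of A (users that are neither resolved nor A are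
   isolated VNs; slots that are neither in A' nor A's own are isolated CNs). *)
Definition recon m n (S : config m n) (A : 'I_m) : 'I_m -> 'I_n -> bool :=
  fun u i =>
    [&& u \in resolved (Gind S A), i \notin S A, ~~ residual S A i & i \in S u]
    || ((u == A) && (i \in S A)).

(* A_B(A): Some b if handshake possible, None for 'x'. *)
Definition AB m n (S : config m n) (A B : 'I_m) : option bool :=
  if Gres S A B then Some (resolvable (remove_cns (recon S A) (S B)) A) else None.

Definition g101 m n (S : config m n) (A B : 'I_m) : bool :=
  [&& Gres S A B, AB S A B == Some false & Gres S B A].

(* Probability that a user transmits exactly in the slot set T: it draws the
   degree #|T| with probability lambda_{#|T|} (degrees range over 0..q) and then
   chooses that set among the 'C(n, #|T|) equally likely ones. *)
Definition set_prob (R : realFieldType) (n q : nat) (lam : nat -> R) (T : {set 'I_n}) : R :=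
  (if (#|T| <= q)%N then lam #|T| / ('C(n, #|T|))%:R else 0)%R.

Definition config_prob (R : realFieldType) (m n q : nat) (lam : nat -> R) (S : config m n) : R :=
  (\prod_(j < m) @set_prob R n q lam (S j))%R.

Definition Pr (R : realFieldType) (m n q : nat) (lam : nat -> R) (P : pred (config m n)) : R :=
  (\sum_(S : config m n | P S) @config_prob R m n q lam S)%R.

From mathcomp Require Import all_boot all_order all_algebra.
Import Order.TTheory GRing.Theory Num.Theory.
Local Open Scope ring_scope.

(* If B resolves A, then A owns a slot c that B does not use.  In the graph
   A_B that slot survives, and in A's reconstruction an own slot is connected
   to A alone, so c is a singleton for A and the first peeling round already
   resolves A. *)

Section Peeling.

Variables (V C : finType) (E : V -> C -> bool).

Lemma resolved_has_edge (v : V) : v \in resolved E -> exists c, E v c.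
Proof.
rewrite /resolved; elim: #|V| v => [|k IH] v /=; first by rewrite inE.
rewrite /peel_step inE => /orP [/IH //|].
by rewrite inE => /existsP [c /andP [Ec _]]; exists c.
Qed.

Lemma singleton_resolved (v : V) (c : C) :
  E v c -> (forall u, E u c -> u = v) -> v \in resolved E.
Proof.
move=> Evc only_v.
have v_first : v \in peel_step E set0.
  rewrite /peel_step inE; apply/orP; right; rewrite inE.
  apply/existsP; exists c; rewrite Evc /=.
  by apply/forallP => u; apply/implyP => /only_v ->; rewrite eqxx.
rewrite /resolved; have : (0 < #|V|)%N by apply/card_gt0P; exists v.
elim: #|V| => [//|[|k] IH] _ //=.
by rewrite /peel_step inE IH.
Qed.

End Peeling.

Section Handshake.

Variables (m n : nat) (S : config m n).

Lemma Gres_private_slot (A B : 'I_m) :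
  Gres S B A -> exists2 c, c \in S A & c \notin S B.
Proof.
by case/resolved_has_edge => c /andP [cA cB]; exists c.
Qed.

Lemma recon_own_slot (A u : 'I_m) (c : 'I_n) :
  c \in S A -> recon S A u c = (u == A).
Proof. by move=> cA; rewrite /recon cA !andbF andbT. Qed.

Lemma handshake_resolves (A B : 'I_m) :
  Gres S B A -> resolvable (remove_cns (recon S A) (S B)) A.
Proof.
case/Gres_private_slot => c cA cB.
apply: (@singleton_resolved _ _ _ _ c) => [|u].
  by rewrite /remove_cns recon_own_slot // eqxx.
by rewrite /remove_cns recon_own_slot // => /andP [/eqP].
Qed.

Lemma g101_never (A B : 'I_m) : g101 S A B = false.
Proof.
apply/negbTE/and3P => [[GAB]]; rewrite /AB GAB => /eqP [] not_res.
by move/handshake_resolves; rewrite not_res.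
Qed.

End Handshake.

(* The event is empty, so no hypothesis on the degree distribution is used. *)
Theorem theorem1 (R : realFieldType) (m n q : nat) (lam : nat -> R)
  (hqn : (q <= n)%N)
  (hlam0 : forall l, (l <= q)%N -> 0 <= lam l)
  (hlam1 : \sum_(l < q.+1) lam l = 1)
  (A B : 'I_m) (hAB : A != B) :
  Pr q lam (fun S : config m n => g101 S A B) = 0.
Proof. by rewrite /Pr big_pred0 // => S; rewrite g101_never. Qed.
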